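(* Let $G$ be a finite simple graph with adjacency matrix $A$. Then every realization of $G$ by Pauli strings uses strings of length at least $\operatorname{rank}_{\mathbb{F}_2}(A)/2$, and there exists a realization of $G$ by Pauli strings of length exactly $\operatorname{rank}_{\mathbb{F}_2}(A)/2$.
   Context: $\operatorname{rank}_{\mathbb{F}_2}(A)$ is the rank of the $0/1$ matrix $A$ over the field with two elements (it is even since $A$ is symmetric with zero diagonal). A Pauli string of length $\ell$ is a tensor product of $\ell$ matrices from $\{I,X,Y,Z\}$. A realization of $G$ on $\{1,\dots,n\}$ is a tuple $(S_1,\dots,S_n)$ of Pauli strings of a common length with $S_iS_j=-S_jS_i$ if $i\sim j$ and $S_iS_j=S_jS_i$ otherwise. *)

From mathcomp Require Import all_boot all_order all_algebra all_field.
From mathcomp Require Import mxtens.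
Set Implicit Arguments. Unset Strict Implicit. Unset Printing Implicit Defensive.
Import GRing.Theory Num.Theory.
Local Open Scope ring_scope.

Inductive pauli := PI | PX | PY | PZ.

Definition pauli_mx (p : pauli) : 'M[algC]_2 :=
  \matrix_(i < 2, j < 2)
   match p with
   | PI => if i == j then 1 else 0
   | PX => if i == j then 0 else 1
   | PY => if i == j then 0 else if (i == 0 :> nat) then - 'i else 'i
   | PZ => if i == j then (if (i == 0 :> nat) then 1 else -1) else 0
   end.

Fixpoint pdim (s : seq pauli) : nat :=
  if s is _ :: s' then (2 * pdim s')%N else 1%N.

Fixpoint pstr_mx (s : seq pauli) : 'M[algC]_(pdim s) :=
  match s return 'M[algC]_(pdim s) with
  | [::] => 1%:M
  | p :: s' => tensmx (pauli_mx p) (pstr_mx s')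
  end.

Lemma pdim_size (s : seq pauli) : pdim s = (2 ^ size s)%N.
Proof. by elim: s => //= _ s ->; rewrite expnS. Qed.

Lemma pdim_tuple l (t : l.-tuple pauli) : pdim t = (2 ^ l)%N.
Proof. by rewrite pdim_size size_tuple. Qed.

Definition pauli_string_mx l (t : l.-tuple pauli) : 'M[algC]_(2 ^ l) :=
  castmx (pdim_tuple t, pdim_tuple t) (pstr_mx t).

Definition realization n (adj : rel 'I_n) l (S : 'I_n -> l.-tuple pauli) :=
  forall i j : 'I_n,
    if adj i j then
      pauli_string_mx (S i) *m pauli_string_mx (S j)
      = - (pauli_string_mx (S j) *m pauli_string_mx (S i))
    else
      pauli_string_mx (S i) *m pauli_string_mx (S j)
      = pauli_string_mx (S j) *m pauli_string_mx (S i).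

Definition adj_mx_F2 n (adj : rel 'I_n) : 'M['F_2]_n :=
  \matrix_(i, j) (adj i j)%:R.

(* Over F_2, a Pauli letter is determined by its (x, z) coordinates, two letters
   anticommute iff their coordinates have symplectic product 1, and two Pauli
   strings anticommute iff the number of anticommuting positions is odd. Hence
   the F_2 matrix recording which strings of a realization anticommute is the
   adjacency matrix, and it factors through F_2^(2l): its rank is at most 2l.
   Conversely, an alternating F_2 matrix A with A_ab = 1 yields one letter per
   vertex (x-bit A_ib, z-bit A_ia) accounting for a rank-2 symplectic part, and
   the remainder A + A_.b A_a. + A_.a A_b. is alternating of rank at most
   rank A - 2; iterating produces strings of length at most rank A / 2. *)
From mathcomp Require Import all_boot all_order all_algebra all_field.
From mathcomp Require Import mxtens zify.
Set Implicit Arguments. Unset Strict Implicit. Unset Printing Implicit Defensive.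
Import GRing.Theory Num.Theory.
Local Open Scope ring_scope.

Section CastTensor.
Variable R : comPzRingType.

Lemma castmx_mulmx m m' (e : m = m') (M N : 'M[R]_m) :
  castmx (e, e) (M *m N) = castmx (e, e) M *m castmx (e, e) N.
Proof. by case: m' / e. Qed.

Lemma castmx_scale m m' (e : m = m') c (M : 'M[R]_m) :
  castmx (e, e) (c *: M) = c *: castmx (e, e) M.
Proof. by case: m' / e. Qed.

Lemma castmx_scalar1 m m' (e : m = m') : castmx (e, e) (1%:M : 'M[R]_m) = 1%:M.
Proof. by case: m' / e. Qed.

Lemma tensmx_scale m n p q a b (A : 'M[R]_(m, n)) (B : 'M[R]_(p, q)) :
  (a *: A) *t (b *: B) = (a * b) *: (A *t B).
Proof. by apply/matrixP=> i j; rewrite !mxE mulrACA. Qed.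

Lemma tensmx_scalar1 m p : (1%:M : 'M[R]_m) *t (1%:M : 'M[R]_p) = 1%:M.
Proof.
apply/matrixP=> i j.
case: (mxtens_indexP i) => i0 i1; case: (mxtens_indexP j) => j0 j1.
rewrite tensmxE !mxE (inj_eq (can_inj (@mxtens_indexK _ _))) xpair_eqE.
by case: (i0 == j0); case: (i1 == j1); rewrite ?mulr1 ?mulr0.
Qed.

End CastTensor.

Definition anticommuting (p q : pauli) : bool :=
  match p, q with
  | PI, _ | _, PI | PX, PX | PY, PY | PZ, PZ => false
  | _, _ => true
  end.

Fixpoint anticomm_count (s t : seq pauli) : nat :=
  if (s, t) is (p :: s', q :: t') then
    (anticommuting p q + anticomm_count s' t')%N
  else 0%N.

Lemma ord2_cases (i : 'I_2) : i = 0 \/ i = 1.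
Proof. by case: i => [[|[|k]] Hk]; [left|right|]; try apply/val_inj. Qed.

Lemma pauli_mx_sq p : pauli_mx p *m pauli_mx p = 1.
Proof.
have ii : 'i * 'i = -1 :> algC by rewrite -expr2 sqrCi.
apply/matrixP=> i j; rewrite !mxE !big_ord_recl !big_ord0 !mxE.
case: (ord2_cases i) => ->; case: (ord2_cases j) => ->; case: p => /=;
  by rewrite ?(mul0r, mulr0, mul1r, mulr1, addr0, add0r, mulrNN, mulNr, mulrN,
               ii, opprK, oppr0).
Qed.

Lemma pauli_mx_comm p q :
  pauli_mx p *m pauli_mx q
  = (-1) ^+ anticommuting p q *: (pauli_mx q *m pauli_mx p).
Proof.
have ii : 'i * 'i = -1 :> algC by rewrite -expr2 sqrCi.
apply/matrixP=> i j; rewrite !mxE !big_ord_recl !big_ord0 !mxE.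
case: (ord2_cases i) => ->; case: (ord2_cases j) => ->; case: p; case: q => /=;
  rewrite ?expr0 ?expr1 ?scale1r ?scaleN1r ?mxE;
  by rewrite ?(mul0r, mulr0, mul1r, mulr1, addr0, add0r, mulrNN, mulNr, mulrN,
               ii, opprK, oppr0).
Qed.

Lemma pauli_string_mx_cons l p (t : l.-tuple pauli) :
  pauli_string_mx (cons_tuple p t)
  = castmx (esym (expnS 2 l), esym (expnS 2 l)) (pauli_mx p *t pauli_string_mx t).
Proof.
rewrite /pauli_string_mx; move: (pdim_tuple (cons_tuple p t)) (pdim_tuple t) => /=.
move: (pstr_mx t); move: (pdim t) => k M e1 e2; subst k.
by rewrite castmx_id (eq_irrelevance e1 (esym (expnS 2 l))).
Qed.

Lemma pauli_string_mx_sq l (s : l.-tuple pauli) :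
  pauli_string_mx s *m pauli_string_mx s = 1%:M.
Proof.
elim: l s => [|l IHl] s.
  by rewrite (tuple0 s) /pauli_string_mx castmx_scalar1 mulmx1.
case/tupleP: s => p s.
rewrite pauli_string_mx_cons -castmx_mulmx tensmx_mul pauli_mx_sq IHl.
by rewrite tensmx_scalar1 castmx_scalar1.
Qed.

Lemma pauli_string_mx_comm l (s t : l.-tuple pauli) :
  pauli_string_mx s *m pauli_string_mx t
  = (-1) ^+ anticomm_count s t *: (pauli_string_mx t *m pauli_string_mx s).
Proof.
elim: l s t => [|l IHl] s t.
  by rewrite (tuple0 s) (tuple0 t) expr0 scale1r.
case/tupleP: s => p s; case/tupleP: t => q t.
rewrite !pauli_string_mx_cons -!castmx_mulmx !tensmx_mul pauli_mx_comm IHl.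
by rewrite tensmx_scale -castmx_scale exprD.
Qed.

Lemma right_invertible_neq_opp (F : numFieldType) n (Q R : 'M[F]_n) :
  (0 < n)%N -> Q *m R = 1%:M -> Q <> - Q.
Proof.
move=> n_gt0 QR QN; have := congr1 (mulmx^~ R) QN; rewrite /= mulNmx QR.
move/matrixP/(_ (Ordinal n_gt0) (Ordinal n_gt0)) => /eqP.
by rewrite !mxE eqxx eq_sym eqNr oner_eq0.
Qed.

Lemma pauli_string_mx_relP l (s t : l.-tuple pauli) (b : bool) :
  (if b then pauli_string_mx s *m pauli_string_mx t
             = - (pauli_string_mx t *m pauli_string_mx s)
   else pauli_string_mx s *m pauli_string_mx t
             = pauli_string_mx t *m pauli_string_mx s)
  <-> odd (anticomm_count s t) = b.
Proof.
have unit_ts : (pauli_string_mx t *m pauli_string_mx s) *m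
               (pauli_string_mx s *m pauli_string_mx t) = 1%:M.
  rewrite mulmxA -(mulmxA (pauli_string_mx t)) pauli_string_mx_sq mulmx1.
  exact: pauli_string_mx_sq.
have neq_opp := right_invertible_neq_opp (expn_gt0 2 l) unit_ts.
rewrite pauli_string_mx_comm -signr_odd; split; last first.
  by move=> ->; case: b; rewrite ?scale1r ?scaleN1r.
by case: b; case: odd; rewrite ?scale1r ?scaleN1r // => /esym.
Qed.

Definition pauli_gram n l (S : 'I_n -> l.-tuple pauli) : 'M['F_2]_n :=
  \matrix_(i, j) (anticomm_count (S i) (S j))%:R.

Lemma F2_cases (x : 'F_2) : x = 0 \/ x = 1.
Proof. by case: x => [[|[|k]] Hk]; [left|right|]; try apply/val_inj. Qed.

Lemma pchar_F2 : 2 \in [pchar 'F_2].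
Proof. exact: pchar_Fp. Qed.

Lemma natr_F2 m : (m%:R : 'F_2) = (odd m)%:R.
Proof. by rewrite -Fp_nat_mod // modn2. Qed.

Lemma natr_F2_inj : injective (fun b : bool => b%:R : 'F_2).
Proof. by case; case => // /eqP; rewrite ?oner_eq0 // eq_sym oner_eq0. Qed.

Lemma realization_pauli_gramP n (adj : rel 'I_n) l (S : 'I_n -> l.-tuple pauli) :
  realization adj S <-> pauli_gram S = adj_mx_F2 adj.
Proof.
split=> [realS | gramS i j].
  apply/matrixP => i j.
  by rewrite !mxE natr_F2 ((pauli_string_mx_relP _ _ _).1 (realS i j)).
apply/pauli_string_mx_relP/natr_F2_inj.
by move/matrixP: gramS => /(_ i j); rewrite !mxE -natr_F2.
Qed.

Definition pauli_x (p : pauli) : 'F_2 := match p with PX | PY => 1 | _ => 0 end.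
Definition pauli_z (p : pauli) : 'F_2 := match p with PZ | PY => 1 | _ => 0 end.

Lemma anticommuting_F2 p q :
  (anticommuting p q)%:R = pauli_x p * pauli_z q + pauli_z p * pauli_x q.
Proof. by case: p; case: q; apply/val_inj. Qed.

Lemma anticomm_count_sum l (s t : l.-tuple pauli) :
  anticomm_count s t = (\sum_(j < l) anticommuting (tnth s j) (tnth t j))%N.
Proof.
elim: l s t => [|l IHl] s t; first by rewrite (tuple0 s) (tuple0 t) big_ord0.
case/tupleP: s => p s; case/tupleP: t => q t.
by rewrite big_ord_recl /= !tnth0 IHl; under eq_bigr do rewrite !tnthS.
Qed.

Lemma mxrank_pauli_gram n l (S : 'I_n -> l.-tuple pauli) :
  (\rank (pauli_gram S) <= l.*2)%N.
Proof.
pose X : 'M['F_2]_(n, l + l) := \matrix_(i, j)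
  match split j with
  | inl k => pauli_x (tnth (S i) k) | inr k => pauli_z (tnth (S i) k)
  end.
pose Y : 'M['F_2]_(l + l, n) := \matrix_(j, i)
  match split j with
  | inl k => pauli_z (tnth (S i) k) | inr k => pauli_x (tnth (S i) k)
  end.
have -> : pauli_gram S = X *m Y.
  apply/matrixP => i i'; rewrite !mxE anticomm_count_sum natr_sum big_split_ord /=.
  rewrite -big_split /=; apply: eq_bigr => j _.
  by rewrite !mxE (unsplitK (inl j)) (unsplitK (inr j)) anticommuting_F2.
by rewrite -addnn (leq_trans (mxrankM_maxl _ _)) ?rank_leq_col.
Qed.

Lemma mxrank_add_annihilated (F : fieldType) m p n k (A : 'M[F]_(m, n))
    (R : 'M[F]_(k, n)) (B : 'M[F]_(p, n)) (Y : 'M[F]_(n, k)) :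
  (A <= B)%MS -> (R <= B)%MS -> A *m Y = 0 -> R *m Y = 1%:M ->
  (\rank A + k <= \rank B)%N.
Proof.
move=> sAB sRB AY RY.
have capAR : (A :&: R)%MS = 0.
  have /submxP [DA eqA] := capmxSl A R; have /submxP [DR eqR] := capmxSr A R.
  suff DR0 : DR = 0 by rewrite eqR DR0 mul0mx.
  by rewrite -[DR]mulmx1 -RY mulmxA -eqR eqA -mulmxA AY mulmx0.
have rankR : (k <= \rank R)%N by rewrite -{1}(mxrank1 F k) -RY mxrankM_maxl.
apply: leq_trans (mxrankS (_ : (A + R <= B)%MS)); last by rewrite addsmx_sub sAB.
by rewrite mxrank_disjoint_sum // leq_add2l.
Qed.

Section SymplecticReduction.
Variable n : nat.
Implicit Types B : 'M['F_2]_n.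

Definition alternating B := (forall i, B i i = 0) /\ (forall i j, B i j = B j i).

Definition symplectic_reduce B a b : 'M['F_2]_n :=
  B + col b B *m row a B + col a B *m row b B.

Lemma symplectic_reduceE B a b i j :
  symplectic_reduce B a b i j = B i j + B i b * B a j + B i a * B b j.
Proof. by rewrite !mxE !big_ord1 !mxE. Qed.

Lemma alternating_symplectic_reduce B a b :
  alternating B -> alternating (symplectic_reduce B a b).
Proof.
move=> [B_diag B_sym]; split=> [i | i j]; rewrite !symplectic_reduceE.
  by rewrite B_diag add0r (B_sym a i) (B_sym b i) mulrC (addrr_pchar2 pchar_F2).
rewrite (B_sym j i) (B_sym j b) (B_sym a i) (B_sym j a) (B_sym b i).
by rewrite [B b j * _]mulrC [B a j * _]mulrC addrAC.
Qed.

Lemma symplectic_reduce_col B a b : alternating B -> B a b = 1 ->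
  col a (symplectic_reduce B a b) = 0 /\ col b (symplectic_reduce B a b) = 0.
Proof.
move=> [B_diag B_sym] Bab; split; apply/matrixP => i j;
  rewrite [LHS]mxE [RHS]mxE symplectic_reduceE B_diag ?(B_sym b a) Bab;
  by rewrite !mulr0 !mulr1 !addr0 (addrr_pchar2 pchar_F2).
Qed.

Lemma mxrank_symplectic_reduce B a b : alternating B -> B a b = 1 ->
  (\rank (symplectic_reduce B a b) + 2 <= \rank B)%N.
Proof.
move=> altB Bab; have [B_diag B_sym] := altB.
have [col_a col_b] := symplectic_reduce_col altB Bab.
pose Rab := col_mx (row a B) (row b B).
pose Y := row_mx (col b 1%:M) (col a 1%:M) : 'M['F_2]_(n, 1 + 1).
apply: (mxrank_add_annihilated (R := Rab) (Y := Y)).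
- rewrite !addmx_sub ?submx_refl //;
    exact: submx_trans (submxMl _ _) (row_sub _ _).
- by rewrite col_mx_sub !row_sub.
- by rewrite mul_mx_row !col1 -!colE col_a col_b row_mx0.
rewrite mul_col_row -!row_mul !col1 -!colE (scalar_mx_block 1 1).
by congr block_mx; apply/matrixP => i j;
  rewrite !ord1 !mxE ?B_diag ?Bab ?(B_sym b a) ?Bab.
Qed.

End SymplecticReduction.

Lemma F2_mx0_or_entry1 m p (B : 'M['F_2]_(m, p)) :
  B = 0 \/ exists a b, B a b = 1.
Proof.
have [-> | /matrix0Pn [a [b Bab]]] := eqVneq B 0; [by left | right].
by exists a, b; case: (F2_cases (B a b)) Bab => ->.
Qed.

Definition pauli_letter (x z : 'F_2) : pauli :=
  if x == 1 then (if z == 1 then PY else PX) else (if z == 1 then PZ else PI).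

Lemma pauli_x_letter x z : pauli_x (pauli_letter x z) = x.
Proof. by case: (F2_cases x) => ->; case: (F2_cases z) => ->. Qed.

Lemma pauli_z_letter x z : pauli_z (pauli_letter x z) = z.
Proof. by case: (F2_cases x) => ->; case: (F2_cases z) => ->. Qed.

Lemma pauli_gram_symplectic_extend n l (B : 'M['F_2]_n) a b
    (S : 'I_n -> l.-tuple pauli) :
  alternating B -> pauli_gram S = symplectic_reduce B a b ->
  pauli_gram (fun i => cons_tuple (pauli_letter (B i b) (B i a)) (S i)) = B.
Proof.
move=> [_ B_sym] /matrixP gramS; apply/matrixP => i j.
rewrite mxE /= natrD anticommuting_F2 !pauli_x_letter !pauli_z_letter.
have := gramS i j; rewrite mxE => ->.
rewrite symplectic_reduceE -(B_sym a j) -(B_sym b j) addrC -[B i j + _ + _]addrA.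
by rewrite -addrA (addrr_pchar2 pchar_F2) addr0.
Qed.

Lemma alternating_pauli_gram n (B : 'M['F_2]_n) : alternating B ->
  exists l (S : 'I_n -> l.-tuple pauli), pauli_gram S = B /\ (l.*2 <= \rank B)%N.
Proof.
move rankB: (\rank B) => r; elim/ltn_ind: r B rankB => r IHr B rankB altB.
have [-> | [a [b Bab]]] := F2_mx0_or_entry1 B.
  exists 0%N, (fun=> [tuple]).
  by split; first by apply/matrixP => i j; rewrite !mxE.
have rank_reduce := mxrank_symplectic_reduce altB Bab.
have [|l [S [gramS rankS]]] :=
  IHr _ _ _ erefl (alternating_symplectic_reduce a b altB); first by lia.
exists l.+1, (fun i => cons_tuple (pauli_letter (B i b) (B i a)) (S i)).
by split; [exact: pauli_gram_symplectic_extend | rewrite doubleS; lia].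
Qed.

Theorem theorem6 (n : nat) (adj : rel 'I_n) :
  symmetric adj -> irreflexive adj ->
  (forall (l : nat) (S : 'I_n -> l.-tuple pauli),
      realization adj S -> (\rank (adj_mx_F2 adj) <= l.*2)%N)
  /\ exists S : 'I_n -> ((\rank (adj_mx_F2 adj))./2).-tuple pauli,
      realization adj S.
Proof.
move=> adj_sym adj_irr.
have lower l (S : 'I_n -> l.-tuple pauli) :
    realization adj S -> (\rank (adj_mx_F2 adj) <= l.*2)%N.
  by move/realization_pauli_gramP <-; exact: mxrank_pauli_gram.
split=> //.
have alt_adj : alternating (adj_mx_F2 adj).
  by split=> [i | i j]; rewrite !mxE ?adj_irr // adj_sym.
have [l [S [gramS rankS]]] := alternating_pauli_gram alt_adj.
have realS : realization adj S by exact/realization_pauli_gramP.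
have rank_adj : \rank (adj_mx_F2 adj) = l.*2.
  by apply/eqP; rewrite eqn_leq rankS (lower _ S).
by rewrite rank_adj doubleK; exists S.
Qed.
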